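(* For all positive integers $m$ and $k$, \[ \sigma_k(m)=\tau_k(m+1)-\tau_{k-1}(m). \]
   Context: $f_\lambda$ denotes the number of standard Young tableaux of shape $\lambda$, $l(\lambda)$ the number of parts and $d_\lambda$ the number of distinct parts of a partition $\lambda$. For integers $k\ge 0$, $n\ge 1$: $\tau_k(n)=\sum_{\lambda\vdash n,\ l(\lambda)\le k} f_\lambda$ (so $\tau_0(n)=0$) and $\sigma_k(n)=\sum_{\lambda\vdash n,\ l(\lambda)\le k} d_\lambda f_\lambda$. *)

From mathcomp Require Import all_boot all_order all_algebra.
Set Implicit Arguments. Unset Strict Implicit. Unset Printing Implicit Defensive.

Definition is_partition (n : nat) (l : seq nat) : bool :=
  [&& sorted geq l, all (fun x => 0 < x) l & sumn l == n].

Definition tshape (n : nat) (t : n.-tuple 'I_n.+1) : seq nat :=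
  filter (fun x => 0 < x) (map (@nat_of_ord _) t).

(* The list of all partitions of n, each listed once
   (a partition of n has at most n parts, each at most n). *)
Definition partitions (n : nat) : seq (seq nat) :=
  undup [seq tshape t | t <- enum {: n.-tuple 'I_n.+1} & is_partition n (tshape t)].

(* Cells of the Young diagram of lambda: (row, column), 0-indexed. *)
Definition in_diagram (lam : seq nat) (rc : nat * nat) : bool :=
  (rc.1 < size lam) && (rc.2 < nth 0 lam rc.1).

(* A standard Young tableau of shape lam (|lam| = n) is encoded by its inverse:
   the map T sending the entry i (i.e. the number i+1) to the cell it occupies.
   T must be injective with image in the diagram (hence a bijection, as the
   diagram has n cells), and entries must increase along rows and columns. *)
Definition is_SYT (lam : seq nat) (T : {ffun 'I_(sumn lam) -> 'I_(sumn lam) * 'I_(sumn lam)}) : bool :=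
  [&& injectiveb T,
      [forall i, in_diagram lam ((T i).1 : nat, (T i).2 : nat)] &
      [forall i, forall j,
         (((T i).1 <= (T j).1)%N && ((T i).2 <= (T j).2)%N) ==> (i <= j)%N]].

Definition f_SYT (lam : seq nat) : nat :=
  #|[set T : {ffun 'I_(sumn lam) -> 'I_(sumn lam) * 'I_(sumn lam)} | @is_SYT lam T]|.

Definition nparts (lam : seq nat) : nat := size lam.
Definition ndistinct (lam : seq nat) : nat := size (undup lam).

Definition tau (k n : nat) : nat :=
  \sum_(lam <- partitions n | nparts lam <= k) f_SYT lam.

Definition sigma (k n : nat) : nat :=
  \sum_(lam <- partitions n | nparts lam <= k) ndistinct lam * f_SYT lam.

From mathcomp Require Import all_boot all_order all_algebra zify.
Set Implicit Arguments. Unset Strict Implicit. Unset Printing Implicit Defensive.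

(* Reading a standard Young tableau of shape mu |- m+1 backwards, the cell
   holding the largest entry is a removable corner of mu, and the rest is a
   standard tableau of the partition lambda |- m obtained by deleting it; so
   f_mu is the sum of f_lambda over these lambda.  Summing over mu with at most
   k rows turns tau_k(m+1) into a sum over pairs (lambda, a), where a is a row
   of lambda to which a cell can be added keeping at most k rows.  The rows
   that can be grown are the first row of each block of equal parts (one for
   each distinct part) together with the new row l(lambda), the latter being
   allowed exactly when l(lambda) < k.  Hence
   tau_k(m+1) = sigma_k(m) + tau_(k-1)(m). *)

(** * Nonincreasing sequences *)

(* Partitions are handled as sequences read through [nth 0], so that a
   partition and the same partition padded with zeros have the same rows. *)
Definition nonincreasing (l : seq nat) := forall i, nth 0 l i.+1 <= nth 0 l i.

Lemma nonincreasingW l :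
  nonincreasing l -> forall i j, i <= j -> nth 0 l j <= nth 0 l i.
Proof.
move=> l_dec i j /subnK <-; elim: (j - i) => [|d IHd] //=.
by rewrite addSn; apply: leq_trans (l_dec _) IHd.
Qed.

Lemma nonincreasing_behead a l : nonincreasing (a :: l) -> nonincreasing l.
Proof. by move=> l_dec i; exact: (l_dec i.+1). Qed.

Lemma sorted_geq_nonincreasing l : sorted geq l <-> nonincreasing l.
Proof.
split=> [/(sortedP 0) l_sorted i | l_dec]; last by apply/(sortedP 0) => i _; exact: l_dec.
by case: (ltnP i.+1 (size l)) => [/l_sorted // | /(nth_default 0) ->].
Qed.

Lemma nth_pos l : all (fun x => 0 < x) l -> forall i, (0 < nth 0 l i) = (i < size l).
Proof.
move=> l_pos i; case: (ltnP i (size l)) => [lt_il | /(nth_default 0) -> //].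
exact/(allP l_pos)/mem_nth.
Qed.

Lemma eq_from_nth_pos l1 l2 :
  all (fun x => 0 < x) l1 -> all (fun x => 0 < x) l2 ->
  (forall i, nth 0 l1 i = nth 0 l2 i) -> l1 = l2.
Proof.
move=> pos1 pos2 eq12; apply: (@eq_from_nth _ 0) => [|i _]; last exact: eq12.
have size_eq i : (i < size l1) = (i < size l2) by rewrite -!nth_pos ?eq12.
by have := size_eq (size l1); have := size_eq (size l2); rewrite !ltnn; lia.
Qed.

Definition strip0 (l : seq nat) := [seq x <- l | 0 < x].

Lemma sumn_strip0 l : sumn (strip0 l) = sumn l.
Proof. by elim: l => [|[|a] l IHl] //=; rewrite IHl. Qed.

Lemma nth_strip0 l : nonincreasing l -> nth 0 (strip0 l) =1 nth 0 l.
Proof.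
elim: l => [|[|a] l IHl] l_dec i //=; have l'_dec := nonincreasing_behead l_dec.
  have nth0 j : nth 0 l j = 0.
    by apply/eqP; rewrite -leqn0; exact: (nonincreasingW l_dec (leq0n j.+1)).
  by rewrite IHl //; case: i => [|i] /=; rewrite !nth0.
by case: i => [|i] //=; rewrite IHl.
Qed.

Lemma mem_le_sumn (l : seq nat) x : x \in l -> x <= sumn l.
Proof. by elim: l => [|a l IHl] //=; rewrite inE => /orP [/eqP ->|/IHl]; lia. Qed.

Lemma nth_le_sumn l i : nth 0 l i <= sumn l.
Proof.
by case: (ltnP i (size l)) => [/(mem_nth 0)/mem_le_sumn | /(nth_default 0) ->].
Qed.

Lemma size_le_sumn l : all (fun x => 0 < x) l -> size l <= sumn l.
Proof. by elim: l => [|a l IHl] //= /andP [a_pos /IHl]; lia. Qed.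

Lemma nth_pos_lt_sumn l r : nonincreasing l -> 0 < nth 0 l r -> r < sumn l.
Proof.
elim: l r => [|a l IHl] [|r] //= l_dec lr_pos; first lia.
have := IHl r (nonincreasing_behead l_dec) lr_pos.
have := nonincreasingW l_dec (leq0n r.+1); rewrite /=; lia.
Qed.

(** * Young diagrams *)

Lemma in_diagramE l a b : in_diagram l (a, b) = (b < nth 0 l a).
Proof.
rewrite /in_diagram /=; case: (ltnP a (size l)) => // /(nth_default 0) ->.
by rewrite ltn0.
Qed.

Lemma in_diagram_lt_sumn l x : nonincreasing l -> in_diagram l x ->
  x.1 < sumn l /\ x.2 < sumn l.
Proof.
case: x => a b l_dec; rewrite in_diagramE => lt_b; split=> /=.
  by apply: nth_pos_lt_sumn => //; lia.
exact: leq_trans lt_b (nth_le_sumn _ _).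
Qed.

Definition cells (l : seq nat) : seq (nat * nat) :=
  [seq (r, c) | r <- iota 0 (size l), c <- iota 0 (nth 0 l r)].

Lemma mem_cells l x : (x \in cells l) = in_diagram l x.
Proof.
apply/allpairsPdep/idP => [[r [c [r_in c_in ->]]] | ].
  by move: r_in c_in; rewrite /in_diagram !mem_iota /= !add0n => -> ->.
case: x => r c /andP [/= lt_r lt_c]; exists r, c.
by rewrite !mem_iota /= add0n lt_r lt_c.
Qed.

Lemma size_cells l : size (cells l) = sumn l.
Proof.
rewrite size_allpairs_dep -[in RHS](mkseq_nth 0 l) /mkseq.
by congr sumn; apply: eq_map => r; rewrite size_iota.
Qed.

Definition corner_rows (l : seq nat) :=
  [seq r <- iota 0 (size l) | nth 0 l r.+1 < nth 0 l r].

Definition remove_cell (l : seq nat) r := set_nth 0 l r (nth 0 l r).-1.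
Definition corner_cell (l : seq nat) r := (r, (nth 0 l r).-1).

Lemma mem_corner_rows l r :
  (r \in corner_rows l) = (r < size l) && (nth 0 l r.+1 < nth 0 l r).
Proof. by rewrite mem_filter mem_iota add0n andbC. Qed.

Lemma nth_remove_cell l r i :
  nth 0 (remove_cell l r) i = if i == r then (nth 0 l r).-1 else nth 0 l i.
Proof. by rewrite nth_set_nth. Qed.

Lemma size_remove_cell l r : r < size l -> size (remove_cell l r) = size l.
Proof. by move=> lt_r; rewrite size_set_nth; apply/maxn_idPr. Qed.

Lemma sumn_remove_cell l r :
  0 < nth 0 l r -> sumn (remove_cell l r) = (sumn l).-1.
Proof. by rewrite sumn_set_nth0; have := nth_le_sumn l r; lia. Qed.

Lemma corner_pos l r : r \in corner_rows l -> 0 < nth 0 l r.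
Proof. by rewrite mem_corner_rows; lia. Qed.

Lemma nonincreasing_remove_cell l r :
  nonincreasing l -> r \in corner_rows l -> nonincreasing (remove_cell l r).
Proof.
move=> l_dec; rewrite mem_corner_rows => /andP [_ corner_r] i.
rewrite !nth_remove_cell; have := l_dec i; have := l_dec i.+1.
case: (eqVneq i.+1 r) => [eq_i1r|ne_i1r]; case: (eqVneq i r) => [eq_ir|ne_ir];
  by subst => //=; lia.
Qed.

Lemma in_diagram_remove_cell l r x : r \in corner_rows l ->
  in_diagram (remove_cell l r) x = in_diagram l x && (x != corner_cell l r).
Proof.
rewrite mem_corner_rows => /andP [lt_r _]; case: x => a b.
rewrite /in_diagram /= size_remove_cell // nth_remove_cell xpair_eqE.
case: (eqVneq a r) => [->|] /=; last by rewrite andbT.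
by rewrite lt_r; apply/idP/idP; lia.
Qed.

(* Row [size l] stands for a new row. *)
Definition addable (l : seq nat) a := (a == 0) || (nth 0 l a < nth 0 l a.-1).

Definition add_cell (l : seq nat) a := set_nth 0 l a (nth 0 l a).+1.

Lemma nth_add_cell l a i :
  nth 0 (add_cell l a) i = if i == a then (nth 0 l a).+1 else nth 0 l i.
Proof. by rewrite nth_set_nth. Qed.

Lemma size_add_cell l a : size (add_cell l a) = maxn a.+1 (size l).
Proof. by rewrite size_set_nth. Qed.

Lemma sumn_add_cell l a : sumn (add_cell l a) = (sumn l).+1.
Proof. by rewrite sumn_set_nth0; lia. Qed.

Lemma addable_le_size l a : addable l a -> a <= size l.
Proof.
case: a => [|a] //= lt_a; rewrite ltnNge; apply/negP => /(nth_default 0) nth_a.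
by move: lt_a; rewrite /addable /= nth_a.
Qed.

Lemma addable_size l : all (fun x => 0 < x) l -> addable l (size l).
Proof.
by move=> l_pos; rewrite /addable (nth_default 0 (leqnn _)) (nth_pos l_pos); lia.
Qed.

Lemma add_cell_pos l a : all (fun x => 0 < x) l -> a <= size l ->
  all (fun x => 0 < x) (add_cell l a).
Proof.
move=> l_pos le_a; apply/(all_nthP 0) => i.
by rewrite size_add_cell nth_add_cell; case: eqP => // ne_ia; rewrite (nth_pos l_pos); lia.
Qed.

Lemma nonincreasing_add_cell l a :
  nonincreasing l -> addable l a -> nonincreasing (add_cell l a).
Proof.
move=> l_dec a_add i; rewrite !nth_add_cell; have := l_dec i.
case: (eqVneq i.+1 a) a_add => [eq_i1a|ne_i1a]; case: (eqVneq i a) => [eq_ia|ne_ia];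
  by subst => //=; lia.
Qed.

Lemma add_cell_corner l a :
  nonincreasing l -> addable l a -> a \in corner_rows (add_cell l a).
Proof.
move=> l_dec a_add; rewrite mem_corner_rows size_add_cell !nth_add_cell eqxx.
by rewrite gtn_eqF //; have := l_dec a; lia.
Qed.

Lemma remove_cell_addable l r :
  nonincreasing l -> r \in corner_rows l -> addable (strip0 (remove_cell l r)) r.
Proof.
move=> l_dec r_corner; have r'_dec := nonincreasing_remove_cell l_dec r_corner.
rewrite /addable !nth_strip0 // !nth_remove_cell eqxx.
case: r r_corner {r'_dec} => [|r] //= /corner_pos; rewrite ltn_eqF //.
by have := l_dec r; lia.
Qed.

Lemma add_remove_cell l r : all (fun x => 0 < x) l -> nonincreasing l ->
  r \in corner_rows l -> add_cell (strip0 (remove_cell l r)) r = l.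
Proof.
move=> l_pos l_dec r_corner; have r'_dec := nonincreasing_remove_cell l_dec r_corner.
apply: (eq_from_nth_pos _ l_pos).
  apply: add_cell_pos; first exact: filter_all.
  exact/addable_le_size/remove_cell_addable.
move=> i; rewrite nth_add_cell !nth_strip0 // !nth_remove_cell.
by case: eqP => [->|_]; rewrite ?eqxx //; have := corner_pos r_corner; lia.
Qed.

Lemma remove_add_cell l a : all (fun x => 0 < x) l -> nonincreasing l ->
  addable l a -> strip0 (remove_cell (add_cell l a) a) = l.
Proof.
move=> l_pos l_dec a_add; have a_corner := add_cell_corner l_dec a_add.
have a'_dec := nonincreasing_add_cell l_dec a_add.
apply: (eq_from_nth_pos _ l_pos) => [|i]; first exact: filter_all.
rewrite nth_strip0; last exact: nonincreasing_remove_cell.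
by rewrite nth_remove_cell !nth_add_cell; case: (eqVneq i a) => [->|]; rewrite ?eqxx.
Qed.

Lemma head_in_behead x y l :
  nonincreasing [:: x, y & l] -> (x \in y :: l) = (y == x).
Proof.
move=> l_dec; rewrite inE eq_sym; case: eqP => //= ne_xy; apply/negP => x_in.
have le_xy : x <= y.
  rewrite -(nth_index 0 x_in).
  exact: (nonincreasingW l_dec (i := 1) (j := (index x l).+2)).
by have := l_dec 0; rewrite /=; lia.
Qed.

(* The old rows that can be grown are the first rows of the blocks of equal
   parts, one for each distinct part. *)
Lemma count_addable l : nonincreasing l -> all (fun x => 0 < x) l ->
  count (addable l) (iota 0 (size l)) = size (undup l).
Proof.
elim: l => [|x [|y l] IHl] //= l_dec /andP [x_pos l_pos].
have := IHl (nonincreasing_behead l_dec) l_pos; rewrite /= (head_in_behead l_dec).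
rewrite (iotaDl 2 0) (iotaDl 1 0) !count_map.
rewrite (@eq_count _ _ (preim (addn 1) (addable (y :: l)))) // => IH.
have -> : addable [:: x, y & l] 1 = (y < x) by [].
by have /= := l_dec 0; case: ltngtP => //= *; lia.
Qed.

(** * Standard tableaux as words of cells *)

Definition cell_le (x y : nat * nat) := (x.1 <= y.1) && (x.2 <= y.2).

(* A standard Young tableau of shape l, read as the word of the cells holding
   the entries 1, 2, ...; this is the inverse encoding used by [is_SYT]. *)
Definition standard_word (l : seq nat) (w : seq (nat * nat)) :=
  [/\ size w = sumn l, uniq w, all (in_diagram l) w &
      forall i j, i < size w -> j < size w ->
        cell_le (nth (0, 0) w i) (nth (0, 0) w j) -> i <= j].

Lemma corner_cell_maximal l r x : nonincreasing l -> r \in corner_rows l ->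
  in_diagram (remove_cell l r) x -> ~~ cell_le (corner_cell l r) x.
Proof.
move=> l_dec r_corner; rewrite (in_diagram_remove_cell _ r_corner).
move: r_corner; rewrite mem_corner_rows => /andP [lt_r corner_r].
case: x => a b /andP []; rewrite in_diagramE /cell_le /corner_cell /= xpair_eqE.
case: (eqVneq a r) => [-> | ne_ar] /=; first lia.
move=> lt_b _; apply/negP => /andP [le_ra le_b].
by have := nonincreasingW l_dec (_ : r.+1 <= a); lia.
Qed.

Lemma standard_word_rcons l r w : nonincreasing l -> r \in corner_rows l ->
  standard_word (remove_cell l r) w -> standard_word l (rcons w (corner_cell l r)).
Proof.
move=> l_dec r_corner [w_size w_uniq w_diag w_std].
have r_pos := corner_pos r_corner.
have r_diag : in_diagram l (corner_cell l r).
  by move: r_corner; rewrite mem_corner_rows /in_diagram /=; lia.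
have w_sub x : x \in w -> in_diagram l x /\ x != corner_cell l r.
  by move/(allP w_diag); rewrite in_diagram_remove_cell // => /andP [].
split.
- by rewrite size_rcons w_size sumn_remove_cell //; have := nth_le_sumn l r; lia.
- by rewrite rcons_uniq w_uniq andbT; apply/negP => /w_sub [_]; rewrite eqxx.
- by rewrite all_rcons r_diag; apply/allP => x /w_sub [].
move=> i j; rewrite size_rcons !nth_rcons !ltnS.
case: (ltngtP i (size w)) => // [lt_i | ->] _; case: (ltngtP j (size w)) => // j_rel _.
- exact: w_std.
- by rewrite j_rel (ltnW lt_i).
move=> le_c; have := corner_cell_maximal l_dec r_corner.
by move/(_ _ (allP w_diag _ (mem_nth (0, 0) j_rel))); rewrite le_c.
Qed.

Lemma standard_word_last_max l w c : standard_word l (rcons w c) ->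
  forall x, in_diagram l x -> cell_le c x -> x = c.
Proof.
case=> wc_size wc_uniq wc_diag wc_std.
have wc_cells : rcons w c =i cells l.
  apply: (uniq_min_size wc_uniq _ _).2 => [y /(allP wc_diag)|]; first by rewrite mem_cells.
  by rewrite size_cells wc_size.
move=> x; rewrite -mem_cells -wc_cells => x_in le_cx.
have lt_w : size w < size (rcons w c) by rewrite size_rcons.
have lt_x : index x (rcons w c) < size (rcons w c) by rewrite index_mem.
have nth_c : nth (0, 0) (rcons w c) (size w) = c by rewrite nth_rcons ltnn eqxx.
have := wc_std _ _ lt_w lt_x; rewrite nth_c nth_index // => /(_ le_cx) le_x.
have idx_x : index x (rcons w c) = size w by move: lt_x; rewrite size_rcons; lia.
by rewrite -(nth_index (0, 0) x_in) idx_x nth_c.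
Qed.

Lemma max_cell_corner l c : in_diagram l c ->
  (forall x, in_diagram l x -> cell_le c x -> x = c) ->
  exists2 r, r \in corner_rows l & c = corner_cell l r.
Proof.
case: c => r b; rewrite in_diagramE => lt_b c_max.
have lt_r : r < size l by rewrite ltnNge; apply: contraL lt_b => /(nth_default 0) ->.
have last_b : b.+1 = nth 0 l r.
  apply/eqP; rewrite eqn_leq lt_b leqNgt; apply/negP => lt_b1.
  have : (r, b.+1) = (r, b).
    by apply: c_max; rewrite ?in_diagramE /cell_le /= ?leqnn ?leqnSn.
  by case; lia.
have corner_r : nth 0 l r.+1 < nth 0 l r.
  rewrite ltnNge; apply/negP => le_r1.
  have : (r.+1, b) = (r, b) by apply: c_max; rewrite ?in_diagramE /cell_le /=; lia.
  by case; lia.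
by exists r; rewrite ?mem_corner_rows ?lt_r // /corner_cell -last_b.
Qed.

Lemma standard_word_last l w c : standard_word l (rcons w c) ->
  exists2 r, r \in corner_rows l &
    c = corner_cell l r /\ standard_word (remove_cell l r) w.
Proof.
move=> wc_std; have [wc_size wc_uniq wc_diag wc_lt] := wc_std.
have c_diag : in_diagram l c by move: wc_diag; rewrite all_rcons => /andP [].
have [r r_corner c_corner] := max_cell_corner c_diag (standard_word_last_max wc_std).
exists r => //; split => //; split.
- by move: wc_size; rewrite size_rcons sumn_remove_cell ?corner_pos //; lia.
- by move: wc_uniq; rewrite rcons_uniq => /andP [].
- apply/allP => x x_w; rewrite in_diagram_remove_cell // -c_corner.
  move: wc_uniq wc_diag; rewrite rcons_uniq all_rcons => /andP [c_notin _] /andP [_ /allP].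
  by move/(_ _ x_w) ->; apply: contraNneq c_notin => <-.
- move=> i j lt_i lt_j; have := wc_lt i j; rewrite !size_rcons !nth_rcons lt_i lt_j.
  by apply; lia.
Qed.

Fixpoint standard_words n l : seq (seq (nat * nat)) :=
  if n is n'.+1 then
    [seq rcons w (corner_cell l r)
      | r <- corner_rows l, w <- standard_words n' (remove_cell l r)]
  else [:: [::]].

Lemma standard_wordsP n l : nonincreasing l -> sumn l = n ->
  uniq (standard_words n l) /\
  forall w, w \in standard_words n l <-> standard_word l w.
Proof.
elim: n l => [|n IHn] l l_dec l_sum /=.
  split=> // w; rewrite inE; split => [/eqP -> | [w_size _ _ _]]; first by split.
  by case: w w_size => // ? ?; rewrite l_sum.
have IH r : r \in corner_rows l -> uniq (standard_words n (remove_cell l r)) /\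
    forall w, w \in standard_words n (remove_cell l r) <->
              standard_word (remove_cell l r) w.
  move=> r_corner; apply: IHn; first exact: nonincreasing_remove_cell.
  by rewrite sumn_remove_cell ?l_sum // corner_pos.
split.
  apply: allpairs_uniq_dep => [|r /IH [] //|[r1 w1] [r2 w2] _ _ /= /rcons_inj [-> -> _] //].
  exact/filter_uniq/iota_uniq.
move=> w; split.
  case/allpairsPdep => r [w' [r_corner w'_in ->]].
  by apply: standard_word_rcons => //; apply/(IH r r_corner).2.
case/lastP: w => [[w_size] | w c wc_std]; first by move: w_size; rewrite l_sum.
have [r r_corner [-> w_std]] := standard_word_last wc_std.
by apply/allpairsPdep; exists r, w; split => //; apply/(IH r r_corner).2.
Qed.

Definition ord_pair_val n (p : 'I_n * 'I_n) : nat * nat := (p.1 : nat, p.2 : nat).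

Lemma ord_pair_val_inj n : injective (@ord_pair_val n).
Proof. by move=> [a b] [c d] [/val_inj -> /val_inj ->]. Qed.

Definition tableau_word n (T : {ffun 'I_n -> 'I_n * 'I_n}) : seq (nat * nat) :=
  [seq ord_pair_val (T i) | i <- enum 'I_n].

Lemma size_tableau_word n T : size (@tableau_word n T) = n.
Proof. by rewrite size_map size_enum_ord. Qed.

Lemma nth_tableau_word n T (i : 'I_n) :
  nth (0, 0) (@tableau_word n T) i = ord_pair_val (T i).
Proof. by rewrite (nth_map i) ?size_enum_ord // nth_ord_enum. Qed.

Lemma tableau_word_inj n : injective (@tableau_word n).
Proof.
move=> T1 T2 eq_w; apply/ffunP => i; apply: (@ord_pair_val_inj n).
by rewrite -!nth_tableau_word eq_w.
Qed.

Lemma tableau_word_uniq n (T : {ffun 'I_n -> 'I_n * 'I_n}) :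
  uniq (tableau_word T) = injectiveb T.
Proof.
have -> : tableau_word T = map (@ord_pair_val n) (map T (enum 'I_n)) by rewrite -map_comp.
by rewrite (map_inj_uniq (@ord_pair_val_inj n)).
Qed.

Lemma is_SYT_standard_word l T : @is_SYT l T <-> standard_word l (tableau_word T).
Proof.
rewrite /is_SYT -(tableau_word_uniq T); split.
  case/and3P => T_uniq /forallP T_diag /forallP T_std; split => //.
  - by rewrite size_tableau_word.
  - by apply/allP => _ /mapP [i _ ->]; exact: T_diag.
  move=> i j; rewrite size_tableau_word => lt_i lt_j.
  have /forallP/(_ (Ordinal lt_j))/implyP := T_std (Ordinal lt_i).
  rewrite -[i]/(nat_of_ord (Ordinal lt_i)) -[j]/(nat_of_ord (Ordinal lt_j)).
  by rewrite !nth_tableau_word.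
case=> _ T_uniq T_diag T_std; apply/and3P; split => //.
  by apply/forallP => i; apply: (allP T_diag); exact: map_f (mem_enum _ _).
apply/forallP => i; apply/forallP => j; apply/implyP => le_ij.
by apply: T_std; rewrite ?size_tableau_word // !nth_tableau_word.
Qed.

Lemma standard_word_tableau l w : nonincreasing l -> standard_word l w ->
  exists T, @tableau_word (sumn l) T = w.
Proof.
move=> l_dec [w_size _ w_diag _].
exists [ffun i : 'I_(sumn l) =>
          (insubd i (nth (0, 0) w i).1, insubd i (nth (0, 0) w i).2)].
apply: (@eq_from_nth _ (0, 0)); first by rewrite size_tableau_word.
move=> i; rewrite size_tableau_word => lt_i.
have w_i : nth (0, 0) w i \in w by rewrite mem_nth ?w_size.
have [lt1 lt2] := in_diagram_lt_sumn l_dec (allP w_diag _ w_i).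
rewrite -[i]/(nat_of_ord (Ordinal lt_i)) nth_tableau_word ffunE /ord_pair_val /=.
by rewrite !val_insubd /= lt1 lt2; case: nth.
Qed.

Lemma f_SYT_standard_words l : nonincreasing l ->
  f_SYT l = size (standard_words (sumn l) l).
Proof.
move=> l_dec; have [sw_uniq sw_mem] := standard_wordsP l_dec erefl.
rewrite /f_SYT cardE -(size_map (@tableau_word (sumn l))).
apply/perm_size/uniq_perm => //.
  by rewrite (map_inj_uniq (@tableau_word_inj _)) enum_uniq.
move=> w; apply/mapP/idP => [[T] | /sw_mem w_std].
  by rewrite mem_enum inE => /is_SYT_standard_word w_std ->; apply/sw_mem.
have [T T_w] := standard_word_tableau l_dec w_std.
by exists T; rewrite // mem_enum inE; apply/is_SYT_standard_word; rewrite T_w.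
Qed.

Lemma eq_f_SYT l1 l2 : nonincreasing l1 -> nonincreasing l2 ->
  nth 0 l1 =1 nth 0 l2 -> sumn l1 = sumn l2 -> f_SYT l1 = f_SYT l2.
Proof.
move=> l1_dec l2_dec eq_nth eq_sum; rewrite !f_SYT_standard_words // -eq_sum.
have [sw1_uniq sw1_mem] := standard_wordsP l1_dec erefl.
have [sw2_uniq sw2_mem] := standard_wordsP l2_dec (esym eq_sum).
apply/perm_size/uniq_perm => // w.
have eq_diag : in_diagram l1 =1 in_diagram l2 by case=> a b; rewrite !in_diagramE eq_nth.
have eq_std : standard_word l1 w <-> standard_word l2 w.
  by rewrite /standard_word eq_sum (eq_all eq_diag).
by apply/idP/idP => [/sw1_mem/eq_std/sw2_mem | /sw2_mem/eq_std/sw1_mem].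
Qed.

Lemma f_SYT_strip0 l : nonincreasing l -> f_SYT (strip0 l) = f_SYT l.
Proof.
move=> l_dec; have l'_dec : nonincreasing (strip0 l).
  by move=> i; rewrite !nth_strip0.
by apply: eq_f_SYT => //; [exact: nth_strip0 | exact: sumn_strip0].
Qed.

Lemma f_SYT_branching l : nonincreasing l -> 0 < sumn l ->
  f_SYT l = \sum_(r <- corner_rows l) f_SYT (remove_cell l r).
Proof.
move=> l_dec; rewrite f_SYT_standard_words //; case l_sum: (sumn l) => [|n] // _.
rewrite /= size_allpairs_dep sumnE big_map; apply: eq_big_seq => r r_corner.
have r_pos := corner_pos r_corner.
rewrite f_SYT_standard_words ?sumn_remove_cell ?l_sum //.
exact: nonincreasing_remove_cell.
Qed.

(** * Partitions and the recurrence *)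

Lemma mem_partitions n l : (l \in partitions n) = is_partition n l.
Proof.
rewrite /partitions mem_undup; apply/mapP/idP => [[t] | l_part].
  by rewrite mem_filter => /andP [? _] ->.
have /and3P [_ l_pos /eqP l_sum] := l_part.
pose s := [seq inord x : 'I_n.+1 | x <- l ++ nseq (n - size l) 0].
have s_size : size s == n.
  by rewrite size_map size_cat size_nseq subnKC // -l_sum size_le_sumn.
have s_shape : tshape (Tuple s_size) = l.
  rewrite /tshape /=.
  have -> : map (@nat_of_ord _) s = l ++ nseq (n - size l) 0.
    rewrite -map_comp -[RHS]map_id; apply/eq_in_map => x.
    rewrite mem_cat => /orP [/mem_le_sumn | /nseqP [-> _]] /=; last by rewrite inordK.
    by rewrite l_sum => le_x; rewrite inordK.
  rewrite filter_cat (all_filterP l_pos).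
  by rewrite (_ : filter _ _ = [::]) ?cats0 //; elim: (n - size l).
by exists (Tuple s_size); rewrite // mem_filter mem_enum andbT s_shape.
Qed.

Lemma partition_nonincreasing n l : is_partition n l -> nonincreasing l.
Proof. by case/and3P => /sorted_geq_nonincreasing. Qed.

Lemma partition_remove_corner n l r : is_partition n.+1 l -> r \in corner_rows l ->
  is_partition n (strip0 (remove_cell l r)).
Proof.
move=> l_part r_corner; have l_dec := partition_nonincreasing l_part.
have r'_dec := nonincreasing_remove_cell l_dec r_corner.
case/and3P: l_part => _ _ /eqP l_sum; apply/and3P; split.
- by apply/sorted_geq_nonincreasing => i; rewrite !nth_strip0.
- exact: filter_all.
- by rewrite sumn_strip0 sumn_remove_cell ?l_sum // corner_pos.
Qed.

Lemma partition_add_cell n l a : is_partition n l -> addable l a ->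
  is_partition n.+1 (add_cell l a).
Proof.
move=> l_part a_add; have l_dec := partition_nonincreasing l_part.
case/and3P: l_part => _ l_pos /eqP l_sum; apply/and3P; split.
- exact/sorted_geq_nonincreasing/nonincreasing_add_cell.
- exact/add_cell_pos/addable_le_size.
- by rewrite sumn_add_cell l_sum.
Qed.

Definition addable_rows k (l : seq nat) :=
  [seq a <- iota 0 (size l).+1 | addable l a && (size (add_cell l a) <= k)].

Lemma size_addable_rows n k l : is_partition n l ->
  size (addable_rows k l) = (size l <= k) * ndistinct l + (size l < k).
Proof.
move=> l_part; have l_dec := partition_nonincreasing l_part.
have /and3P [_ l_pos _] := l_part.
rewrite size_filter -[X in iota 0 X]addn1 iotaD count_cat /= addable_size //.
rewrite size_add_cell (maxn_idPl (leqnSn _)) addn0.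
rewrite (eq_in_count (a2 := fun a => (size l <= k) && addable l a)); last first.
  move=> a; rewrite mem_iota size_add_cell => /andP [_ lt_a].
  by rewrite (maxn_idPr lt_a) andbC.
by case: (size l <= k); rewrite /= ?mul0n ?count_pred0 // mul1n count_addable.
Qed.

Definition removal_pairs m k :=
  [seq (mu, r) | mu <- [seq mu <- partitions m.+1 | nparts mu <= k], r <- corner_rows mu].

Definition addition_pairs m k :=
  [seq (l, a) | l <- partitions m, a <- addable_rows k l].

Definition remove_corner (p : seq nat * nat) := (strip0 (remove_cell p.1 p.2), p.2).

Lemma mem_removal_pairs m k p : (p \in removal_pairs m k) =
  [&& is_partition m.+1 p.1, size p.1 <= k & p.2 \in corner_rows p.1].
Proof.
apply/allpairsPdep/idP => [[mu [r [mu_in r_corner ->]]] | ].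
  by move: mu_in; rewrite mem_filter mem_partitions => /andP [-> ->]; rewrite r_corner.
case: p => mu r /and3P [mu_part mu_size r_corner]; exists mu, r; split => //.
by rewrite mem_filter mem_partitions mu_part andbT.
Qed.

Lemma mem_addition_pairs m k p : (p \in addition_pairs m k) =
  [&& is_partition m p.1, addable p.1 p.2 & size (add_cell p.1 p.2) <= k].
Proof.
apply/allpairsPdep/idP => [[l [a [l_in a_in ->]]] | ].
  by move: l_in a_in; rewrite mem_partitions mem_filter => -> /andP [/andP [-> ->] _].
case: p => l a /and3P [l_part a_add a_size]; exists l, a; split => //.
  by rewrite mem_partitions.
by rewrite mem_filter a_add a_size mem_iota ltnS addable_le_size.
Qed.

Lemma removal_pairs_uniq m k : uniq (removal_pairs m k).
Proof.
apply: allpairs_uniq_dep => [||[? ?] [? ?] _ _ /= [-> ->]] //.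
  exact/filter_uniq/undup_uniq.
by move=> mu _; exact/filter_uniq/iota_uniq.
Qed.

Lemma addition_pairs_uniq m k : uniq (addition_pairs m k).
Proof.
apply: allpairs_uniq_dep => [||[? ?] [? ?] _ _ /= [-> ->]] //.
  exact: undup_uniq.
by move=> l _; exact/filter_uniq/iota_uniq.
Qed.

(* Removing a corner is a bijection onto the pairs (lambda, addable row);
   adding a cell is its inverse. *)
Lemma perm_remove_corner m k :
  perm_eq (map remove_corner (removal_pairs m k)) (addition_pairs m k).
Proof.
have part_props n l : is_partition n l -> all (fun x => 0 < x) l /\ nonincreasing l.
  by move=> l_part; split; [case/and3P: l_part | exact: partition_nonincreasing l_part].
apply: uniq_perm; last 1 first.
- move=> [l a]; rewrite mem_addition_pairs /=; apply/mapP/idP => [[[mu r]] | ].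
    rewrite mem_removal_pairs => /and3P [mu_part mu_size r_corner] [-> ->] /=.
    have [mu_pos mu_dec] := part_props _ _ mu_part.
    rewrite partition_remove_corner ?remove_cell_addable ?add_remove_cell //.
  case/and3P=> l_part a_add a_size; have [l_pos l_dec] := part_props _ _ l_part.
  exists (add_cell l a, a); last by rewrite /remove_corner /= remove_add_cell.
  by rewrite mem_removal_pairs /= partition_add_cell ?add_cell_corner ?a_size.
- rewrite map_inj_in_uniq ?removal_pairs_uniq // => -[mu r] [mu' r'].
  rewrite !mem_removal_pairs /=.
  move=> /and3P [mu_part _ r_corner] /and3P [mu'_part _ r'_corner].
  have [mu_pos mu_dec] := part_props _ _ mu_part.
  have [mu'_pos mu'_dec] := part_props _ _ mu'_part.
  case=> eq_mu eq_r; subst r'; congr pair.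
  by rewrite -(add_remove_cell mu_pos mu_dec r_corner) eq_mu add_remove_cell.
- exact: addition_pairs_uniq.
Qed.

Lemma tau_succ_addable_rows m k :
  tau k m.+1 = \sum_(l <- partitions m) size (addable_rows k l) * f_SYT l.
Proof.
have branching : tau k m.+1 =
    \sum_(p <- removal_pairs m k) f_SYT (remove_corner p).1.
  rewrite big_allpairs_dep /tau -big_filter; apply: eq_big_seq => mu.
  rewrite mem_filter mem_partitions => /andP [_ mu_part].
  have mu_dec := partition_nonincreasing mu_part.
  rewrite f_SYT_branching //; last by case/and3P: mu_part => _ _ /eqP ->.
  apply: eq_big_seq => r r_corner /=.
  by rewrite f_SYT_strip0 //; exact: nonincreasing_remove_cell.
rewrite branching -(big_map remove_corner xpredT (fun p => f_SYT p.1)).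
rewrite (perm_big _ (perm_remove_corner m k)) big_allpairs_dep.
apply: eq_bigr => l _.
by rewrite (eq_bigr (fun=> f_SYT l)) // big_const_seq count_predT iter_addn_0 mulnC.
Qed.

Lemma tau_succ m k : 0 < k -> tau k m.+1 = sigma k m + tau k.-1 m.
Proof.
move=> k_pos; rewrite tau_succ_addable_rows /sigma /tau.
rewrite [X in _ = X + _]big_mkcond [X in _ = _ + X]big_mkcond -big_split /=.
apply: eq_big_seq => l; rewrite mem_partitions => l_part.
rewrite (size_addable_rows _ l_part) /nparts.
rewrite (_ : (size l <= k.-1) = (size l < k)); last lia.
by case: (leqP (size l) k) => ?; case: (ltnP (size l) k) => ? /=; lia.
Qed.

(* The recurrence also holds for m = 0. *)
Theorem mainTheorem8 (m k : nat) (hm : (0 < m)%N) (hk : (0 < k)%N) :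
  ((sigma k m)%:Z = (tau k m.+1)%:Z - (tau k.-1 m)%:Z)%R.
Proof. by rewrite (tau_succ _ hk) PoszD GRing.addrK. Qed.
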